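(* Fix $\sigma\in(0,\tfrac12)$. There exists $\lambda^{*}>0$ such that, denoting by $\overline{\Gamma_0(\lambda)}$ the closure of $\Gamma_0(\lambda)$ in $\mathbb{R}^2$: - for $\lambda\in(0,\lambda^{*})$, $\overline{\Gamma_0(\lambda)}\cap(\{0\}\times(-\infty,0))=\emptyset$; - for $\lambda=\lambda^{*}$, $\overline{\Gamma_0(\lambda)}\cap(\{0\}\times(-\infty,0))=\{(0,-\xi^{*})\}$ for some $\xi^{*}\in(0,+\infty)$; - for $\lambda>\lambda^{*}$, $\overline{\Gamma_0(\lambda)}\cap(\{0\}\times(-\infty,0))=\{(0,-\xi_0),(0,-\xi_1)\}$ for some $0<\xi_0<\xi_1$.
   Context: Let $g(s)=s^2(1-s)$ and $G(u)=u^3/3-u^4/4$ on $[0,1]$. For $\lambda>0$ and $s\in(0,1)$, let $(u_s,v_s)$ be the unique solution, on its maximal interval of existence, of $u'=v$, $v'=-\lambda g(u)$, $u(0)=s$, $v(0)=0$. Let $T_0(s)$ be the time taken by $(u_s,v_s)$ to go from $(s,0)$ to the half-line $\{0\}\times(-\infty,0)$ along the level line $v^2+2\lambda G(u)=2\lambda G(s)$, let $\mathcal{I}^0_\lambda=\{s\in(0,1):T_0(s)>\sigma\}$, and let $\Gamma_0(\lambda)=\{(u_s(\sigma),v_s(\sigma)): s\in\mathcal{I}^0_\lambda\}$. *)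

From Stdlib Require Import Reals.
From Coquelicot Require Import Coquelicot.
Open Scope R_scope.

Definition g (s : R) : R := s ^ 2 * (1 - s).
Definition G (u : R) : R := u ^ 3 / 3 - u ^ 4 / 4.

(* (u,v) solves u' = v, v' = -lam g(u), u(0)=s, v(0)=0 on the time interval [0,T]
   (two-sided derivatives at every point of [0,T]).  Solutions are unique
   (the vector field is polynomial, hence locally Lipschitz), so any such pair
   coincides on [0,T] with the maximal solution (u_s, v_s). *)
Definition is_sol (lam s T : R) (u v : R -> R) : Prop :=
  u 0 = s /\ v 0 = 0 /\
  forall t, 0 <= t <= T ->
    is_derive u t (v t) /\ is_derive v t (- lam * g (u t)).

Definition on_halfline_at (lam s t : R) : Prop :=
  exists u v, is_sol lam s t u v /\ u t = 0 /\ v t < 0.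

Definition T0 (lam s : R) : R :=
  real (Glb_Rbar (fun t => 0 <= t /\ on_halfline_at lam s t)).

Definition I0 (lam sigma : R) (s : R) : Prop :=
  0 < s < 1 /\ T0 lam s > sigma.

Definition Gamma0 (lam sigma : R) (p : R * R) : Prop :=
  exists s, I0 lam sigma s /\
    exists u v, is_sol lam s sigma u v /\ p = (u sigma, v sigma).

Definition closure2 (A : R * R -> Prop) (p : R * R) : Prop :=
  forall eps, 0 < eps -> exists q, A q /\
    sqrt ((fst p - fst q) ^ 2 + (snd p - snd q) ^ 2) < eps.

From Stdlib Require Import Reals Lra Psatz ClassicalEpsilon.
From Coquelicot Require Import Coquelicot.
Open Scope R_scope.

(* Along the level line v^2 = 2 lam (G s - G u) the substitution u = s (1 - w^2)
   turns the descent time from (s, 0) to the axis u = 0 into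
   T0(s) = T1(s) / sqrt lam with T1(s) = int_0^1 2 dw / sqrt (2 s P(s, w)), where
   G s - G (s (1 - w^2)) = s^3 w^2 P(s, w) ([Pquot]) and P > 0 for 0 < s < 1.
   As s |-> 2 s P(s, w) is concave and x |-> 2 / sqrt x convex and decreasing,
   T1 is strictly convex; it blows up at both ends of (0,1), so it has a unique
   minimum m = T1 sm and each level c > m is taken exactly twice.
   A point of Gamma0(lam) close to the half-line comes from an s with T1(s)
   slightly above sigma sqrt lam, and it is then close to (0, -sqrt (2 lam G s)).
   Hence the closure meets the half-line exactly at the points (0, -sqrt (2 lam G s0))
   with T1(s0) = sigma sqrt lam, and lam* = (m / sigma)^2. *)

Lemma is_derive_continuity_pt (f : R -> R) x l : is_derive f x l -> continuity_pt f x.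
Proof.
intros H. apply continuity_pt_filterlim, (@ex_derive_continuous R_AbsRing R_NormedModule).
exists l; exact H.
Qed.

Lemma ex_RInt_continuous_R (f : R -> R) a b :
  (forall z, Rmin a b <= z <= Rmax a b -> continuous f z) -> ex_RInt f a b.
Proof. apply (@ex_RInt_continuous R_CompleteNormedModule). Qed.

Lemma Rmin_pos_bounds a b : 0 < a -> 0 < b -> 0 < Rmin a b /\ Rmin a b <= a /\ Rmin a b <= b.
Proof. intros. split; [apply Rmin_glb_lt; auto|split; [apply Rmin_l|apply Rmin_r]]. Qed.

Lemma exists_step_inside s0 d : 0 < s0 < 1 -> 0 < d ->
  exists h, 0 < h < d /\ h < s0 /\ h < 1 - s0.
Proof.
intros. exists (Rmin d (Rmin s0 (1 - s0)) / 2).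
pose proof (Rmin_l d (Rmin s0 (1 - s0))). pose proof (Rmin_r d (Rmin s0 (1 - s0))).
pose proof (Rmin_l s0 (1 - s0)). pose proof (Rmin_r s0 (1 - s0)).
assert (0 < Rmin d (Rmin s0 (1 - s0))) by (apply Rmin_glb_lt; [|apply Rmin_glb_lt]; lra).
lra.
Qed.

Lemma continuity_pt_Rabs (f : R -> R) x0 : continuity_pt f x0 ->
  forall e, 0 < e -> exists d, 0 < d /\ forall x, Rabs (x - x0) < d -> Rabs (f x - f x0) < e.
Proof.
intros H e He. destruct (H e He) as [d [Hd H']]. exists d. split; auto.
intros x Hx. destruct (Req_dec x x0) as [->|]; [rewrite Rminus_diag, Rabs_R0; auto|].
apply H'. split; [split; [constructor|auto]|]. exact Hx.
Qed.

Lemma is_derive_0_eq (f : R -> R) a b : a <= b ->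
  (forall x, a < x < b -> is_derive f x 0) ->
  (forall x, a <= x <= b -> continuity_pt f x) -> f b = f a.
Proof.
intros Hab Hd Hc. destruct (Req_dec a b) as [->|]; [reflexivity|].
destruct (MVT_gen f a b (fun _ => 0)) as [c [_ Hf]].
- intros x Hx. rewrite Rmin_left, Rmax_right in Hx by lra. auto.
- intros x Hx. rewrite Rmin_left, Rmax_right in Hx by lra. auto.
- lra.
Qed.

Lemma IVT_interval (f : R -> R) a b y : a <= b ->
  (forall x, a <= x <= b -> continuity_pt f x) ->
  Rmin (f a) (f b) <= y <= Rmax (f a) (f b) -> exists z, a <= z <= b /\ f z = y.
Proof.
intros Hab Hc Hy.
destruct (Req_dec (f a) y) as [Ea|Ea]; [exists a; split; [lra|auto]|].
destruct (Req_dec (f b) y) as [Eb|Eb]; [exists b; split; [lra|auto]|].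
destruct (Rle_dec (f a) (f b)).
- rewrite Rmin_left, Rmax_right in Hy by lra.
  destruct (Req_dec a b) as [<-|]; [lra|].
  destruct (Ranalysis5.IVT_interv (fun x => f x - y) a b) as [z [Hz Hfz]]; try lra.
  { intros; apply continuity_pt_minus; [auto|apply continuity_pt_const; intros ? ?; auto]. }
  exists z. split; [lra|simpl in Hfz; lra].
- rewrite Rmin_right, Rmax_left in Hy by lra.
  destruct (Req_dec a b) as [<-|]; [lra|].
  destruct (Ranalysis5.IVT_interv (fun x => y - f x) a b) as [z [Hz Hfz]]; try lra.
  { intros; apply continuity_pt_minus; [apply continuity_pt_const; intros ? ?; auto|auto]. }
  exists z. split; [lra|simpl in Hfz; lra].
Qed.

Lemma is_derive_pos_locally (f : R -> R) x l : is_derive f x l -> 0 < l ->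
  exists d, 0 < d /\ forall h, 0 < h < d -> f (x - h) < f x < f (x + h).
Proof.
intros H Hl. apply is_derive_Reals in H.
destruct (H (l/2) ltac:(lra)) as [d Hd]. exists d. split; [apply cond_pos|].
intros h Hh. split.
- specialize (Hd (-h) ltac:(lra) ltac:(rewrite Rabs_left; lra)).
  replace (x - h) with (x + - h) by ring. apply Rabs_def2 in Hd.
  set (q := (f (x + - h) - f x) / - h) in *.
  assert (f (x + -h) - f x = q * (-h)) by (unfold q; field; lra). nra.
- specialize (Hd h ltac:(lra) ltac:(rewrite Rabs_right; lra)). apply Rabs_def2 in Hd.
  set (q := (f (x + h) - f x) / h) in *.
  assert (f (x + h) - f x = q * h) by (unfold q; field; lra). nra.
Qed.

Lemma is_derive_neg_locally (f : R -> R) x l : is_derive f x l -> l < 0 ->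
  exists d, 0 < d /\ forall h, 0 < h < d -> f (x + h) < f x < f (x - h).
Proof.
intros H Hl. apply is_derive_opp in H.
destruct (is_derive_pos_locally _ x (opp l) H) as [d [Hd H']]; [unfold opp; simpl; lra|].
exists d; split; auto. intros h Hh. specialize (H' h Hh). unfold opp in H'; simpl in H'. lra.
Qed.

Lemma is_derive_min_right (f : R -> R) a c l : a < c ->
  (forall x, a <= x <= c -> f c <= f x) -> is_derive f c l -> l <= 0.
Proof.
intros Hac Hmin Hd. destruct (Rle_dec l 0) as [|Hl]; auto.
destruct (is_derive_pos_locally f c l Hd ltac:(lra)) as [d [Hd0 Hloc]].
destruct (Rmin_pos_bounds (d/2) ((c - a)/2) ltac:(lra) ltac:(lra)) as [Hh [Hh1 Hh2]].
set (h := Rmin (d/2) ((c - a)/2)) in *.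
specialize (Hloc h ltac:(lra)). specialize (Hmin (c - h) ltac:(lra)). lra.
Qed.

Lemma is_derive_min_left (f : R -> R) c b l : c < b ->
  (forall x, c <= x <= b -> f c <= f x) -> is_derive f c l -> 0 <= l.
Proof.
intros Hcb Hmin Hd. destruct (Rle_dec 0 l) as [|Hl]; auto.
destruct (is_derive_neg_locally f c l Hd ltac:(lra)) as [d [Hd0 Hloc]].
destruct (Rmin_pos_bounds (d/2) ((b - c)/2) ltac:(lra) ltac:(lra)) as [Hh [Hh1 Hh2]].
set (h := Rmin (d/2) ((b - c)/2)) in *.
specialize (Hloc h ltac:(lra)). specialize (Hmin (c + h) ltac:(lra)). lra.
Qed.

Lemma mult_sqrt_lt sigma a b : 0 < sigma -> 0 <= a < b -> sigma * sqrt a < sigma * sqrt b.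
Proof. intros. apply Rmult_lt_compat_l; auto. apply sqrt_lt_1_alt. lra. Qed.

Lemma sqrt_sub_le a b : 0 <= a -> 0 <= b -> Rabs (sqrt a - sqrt b) <= sqrt (Rabs (a - b)).
Proof.
intros. pose proof (sqrt_pos a). pose proof (sqrt_pos b).
pose proof (sqrt_sqrt a H). pose proof (sqrt_sqrt b H0).
set (p := sqrt a) in *. set (q := sqrt b) in *. clearbody p q. subst a b.
rewrite <- (sqrt_Rsqr (Rabs (p - q))) by apply Rabs_pos. apply sqrt_le_1_alt.
rewrite <- Rsqr_abs. unfold Rsqr.
replace (p * p - q * q) with ((p - q) * (p + q)) by ring.
rewrite Rabs_mult, (Rabs_right (p+q)) by lra.
destruct (Rle_dec q p); [rewrite Rabs_right by lra|rewrite Rabs_left by lra]; nra.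
Qed.

Lemma inv_sqrt_lipschitz x y m : 0 < m -> m <= x -> m <= y ->
  Rabs (2 / sqrt x - 2 / sqrt y) <= 2 * Rabs (x - y) / (m * sqrt m).
Proof.
intros.
pose proof (sqrt_lt_R0 m H). assert (sqrt m <= sqrt x) by (apply sqrt_le_1_alt; lra).
assert (sqrt m <= sqrt y) by (apply sqrt_le_1_alt; lra).
pose proof (sqrt_sqrt x ltac:(lra)). pose proof (sqrt_sqrt y ltac:(lra)).
pose proof (sqrt_sqrt m ltac:(lra)).
set (p := sqrt x) in *. set (q := sqrt y) in *. set (r := sqrt m) in *.
clearbody p q r. subst x y m.
replace (2 / p - 2 / q) with (2 * (q - p) / (p * q)) by (field; lra).
replace (p * p - q * q) with ((p - q) * (p + q)) by ring.
unfold Rdiv. rewrite !Rabs_mult, (Rabs_right 2) by lra.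
rewrite (Rabs_right (/ (p*q))) by (apply Rle_ge, Rlt_le, Rinv_0_lt_compat; nra).
rewrite (Rabs_right (p+q)) by lra. rewrite Rabs_minus_sym.
assert (0 <= Rabs (p - q)) by apply Rabs_pos.
assert (/ (p*q) <= (p+q) * / (r * r * r)).
{ apply (Rmult_le_reg_l (p*q)); [nra|]. rewrite Rinv_r by nra.
  apply (Rmult_le_reg_l (r*r*r)); [nra|]. field_simplify; nra. }
replace (r * r * r) with ((r*r)*r) in * by ring. nra.
Qed.

Lemma inv_sqrt_tangent y x0 : 0 < y -> 0 < x0 ->
  2 / sqrt x0 - (y - x0) / (x0 * sqrt x0) <= 2 / sqrt y.
Proof.
intros. pose proof (sqrt_lt_R0 _ H). pose proof (sqrt_lt_R0 _ H0).
pose proof (sqrt_sqrt y ltac:(lra)). pose proof (sqrt_sqrt x0 ltac:(lra)).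
set (p := sqrt y) in *. set (q := sqrt x0) in *. clearbody p q. subst y x0.
assert (0 <= (p - q)^2 * (p + 2*q)) by (apply Rmult_le_pos; [apply pow2_ge_0|lra]).
apply (Rmult_le_reg_l (p * (q*q*q))); [apply Rmult_lt_0_compat; [lra|]; nra|].
replace (p * (q * q * q) * (2 / q - (p * p - q * q) / (q * q * q)))
  with (2*p*q*q - p*(p*p - q*q)) by (field; lra).
replace (p * (q * q * q) * (2 / p)) with (2*q*q*q) by (field; lra). nra.
Qed.

Lemma convex_comb_between a b th : 0 < a < b -> 0 < th < 1 -> a < th*a + (1-th)*b < b.
Proof.
intros. assert (th*a < th*b) by (apply Rmult_lt_compat_l; lra).
assert ((1-th)*a < (1-th)*b) by (apply Rmult_lt_compat_l; lra). lra.
Qed.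

Lemma norm2_le_abs_add p q : sqrt (p^2 + q^2) <= Rabs p + Rabs q.
Proof.
pose proof (Rabs_pos p); pose proof (Rabs_pos q).
rewrite <- (sqrt_Rsqr (Rabs p + Rabs q)) by lra. apply sqrt_le_1_alt.
unfold Rsqr. rewrite <- !Rsqr_pow2, (Rsqr_abs p), (Rsqr_abs q). unfold Rsqr. nra.
Qed.

Lemma abs_le_norm2 a b : Rabs a <= sqrt (a^2 + b^2).
Proof.
rewrite <- sqrt_Rsqr_abs. apply sqrt_le_1_alt. rewrite Rsqr_pow2. pose proof (pow2_ge_0 b). lra.
Qed.

Lemma sq_sub_le a b eps : Rabs (a - b) < eps -> eps <= 1 ->
  Rabs (a^2 - b^2) <= eps * (2 * Rabs b + 1).
Proof.
intros Hab He. replace (a^2 - b^2) with ((a - b) * ((a - b) + 2*b)) by ring.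
rewrite Rabs_mult. pose proof (Rabs_pos (a - b)).
assert (Rabs ((a - b) + 2*b) <= 2 * Rabs b + 1).
{ eapply Rle_trans; [apply Rabs_triang|]. rewrite Rabs_mult, (Rabs_right 2) by lra. lra. }
pose proof (Rabs_pos ((a - b) + 2*b)). apply Rmult_le_compat; lra.
Qed.

(** * The energy polynomial *)

Definition PquotA (w : R) := 1 - w^2 + w^4/3.
Definition PquotB (w : R) := 1 - 3/2*w^2 + w^4 - w^6/4.
Definition Pquot (s w : R) := PquotA w - s * PquotB w.
Definition dPquot (s w : R) := (-2*w + 4/3*w^3) - s * (-3*w + 4*w^3 - 3/2*w^5).

Lemma G_sub_Pquot s w : G s - G (s*(1-w^2)) = s^3 * w^2 * Pquot s w.
Proof. unfold G, Pquot, PquotA, PquotB. field. Qed.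

Lemma Pquot_dPquot s w : Pquot s w + w * dPquot s w / 2 = (1-w^2)^2 * (1 - s + s*w^2).
Proof. unfold Pquot, dPquot, PquotA, PquotB. field. Qed.

Lemma is_derive_Pquot s w : is_derive (Pquot s) w (dPquot s w).
Proof. unfold Pquot, PquotA, PquotB, dPquot. auto_derive; auto. field. Qed.

Lemma is_derive_G x : is_derive G x (g x).
Proof. unfold G, g. auto_derive; auto. field. Qed.

Lemma G_increasing a b : a < b -> b <= 1 -> G a < G b.
Proof.
intros Hab Hb. unfold G.
assert (E : b^3/3 - b^4/4 - (a^3/3 - a^4/4)
            = (b-a)/12 * (4*(a^2+a*b+b^2) - 3*(a+b)*(a^2+b^2))) by field.
destruct (Rle_dec 0 a).
- assert (0 < 4*(a^2+a*b+b^2) - 3*(a+b)*(a^2+b^2)).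
  { assert (a^3 <= a^2) by nra. assert (b^3 <= b^2) by nra.
    assert (a*b^2 <= a*b) by nra. assert (a^2*b <= a*b) by nra. nra. }
  nra.
- destruct (Rle_dec b 0).
  + assert (0 < 4*(a^2+a*b+b^2) - 3*(a+b)*(a^2+b^2)).
    { assert (0 < a^2+a*b+b^2) by nra. assert (0 <= -(a+b)*(a^2+b^2)) by nra. nra. }
    nra.
  + assert (0 < b^3) by (apply pow_lt; lra).
    assert (0 < b^3/3 - b^4/4) by (replace (b^4) with (b*b^3) by ring; nra).
    assert (a^3 < 0) by (replace (a^3) with (a*(a*a)) by ring; assert (0 < a*a) by nra; nra).
    assert (0 <= a^4) by (replace (a^4) with ((a*a)*(a*a)) by ring; nra).
    lra.
Qed.

Lemma G_nondecreasing a b : a <= b -> b <= 1 -> G a <= G b.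
Proof.
intros. destruct (Req_dec a b) as [->|]; [lra|]. apply Rlt_le, G_increasing; lra.
Qed.

Lemma G_bounds x : 0 <= x <= 1 -> 0 <= G x <= x / 3.
Proof.
intros. unfold G.
assert (x^4 <= x^3) by (simpl; assert (0 <= x*x*x) by (apply Rmult_le_pos; nra); nra).
assert (x^3 <= x) by (simpl; assert (x*x <= 1) by nra; nra). assert (0 <= x^4) by (apply pow_le; lra). lra.
Qed.

Lemma G_pos s : 0 < s <= 1 -> 0 < G s.
Proof.
intros Hs. pose proof (G_increasing 0 s ltac:(lra) ltac:(lra)) as H. unfold G at 1 in H. simpl in H. lra.
Qed.

Lemma G_preimage_near s0 d : 0 < s0 < 1 -> 0 < d ->
  exists t, 0 < t /\ forall s, 0 < s < 1 -> Rabs (G s - G s0) < t -> Rabs (s - s0) < d.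
Proof.
intros Hs0 Hd. destruct (exists_step_inside s0 d Hs0 Hd) as [h Hh].
pose proof (G_increasing (s0 - h) s0 ltac:(lra) ltac:(lra)).
pose proof (G_increasing s0 (s0 + h) ltac:(lra) ltac:(lra)).
destruct (Rmin_pos_bounds (G s0 - G (s0 - h)) (G (s0 + h) - G s0) ltac:(lra) ltac:(lra))
  as [Ht [Ht1 Ht2]].
exists (Rmin (G s0 - G (s0 - h)) (G (s0 + h) - G s0)). split; auto.
intros s Hs HG. apply Rabs_def2 in HG. apply Rabs_def1.
- destruct (Rlt_le_dec s (s0 + h)); [lra|].
  pose proof (G_nondecreasing (s0 + h) s ltac:(lra) ltac:(lra)). lra.
- destruct (Rlt_le_dec (s0 - h) s); [lra|].
  pose proof (G_nondecreasing s (s0 - h) ltac:(lra) ltac:(lra)). lra.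
Qed.

Lemma Pquot_pos s w : 0 < s < 1 -> 0 < Pquot s w.
Proof.
intros Hs. destruct (Req_dec w 0) as [->|Hw].
- unfold Pquot, PquotA, PquotB. simpl. lra.
- assert (0 < w^2) by (simpl; rewrite Rmult_1_r; apply Rsqr_pos_lt; auto).
  assert (G (s*(1-w^2)) < G s) by (apply G_increasing; nra).
  pose proof (G_sub_Pquot s w). assert (0 < s^3) by (apply pow_lt; lra).
  assert (0 < s^3 * w^2) by nra.
  destruct (Rle_dec (Pquot s w) 0); [nra|lra].
Qed.

Lemma PquotB_bounds w : w^2 <= 1 -> 1/4 <= PquotB w <= 1.
Proof.
intros. unfold PquotB. replace (w^4) with (w^2*w^2) by ring. replace (w^6) with (w^2*w^2*w^2) by ring.
assert (0 <= w^2) by apply pow2_ge_0. set (z := w^2) in *. split; nra.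
Qed.

Lemma PquotA_bounds w : w^2 <= 1 -> PquotA w <= 1 /\ w^2/12 <= PquotA w - PquotB w <= w^2/2.
Proof.
intros. unfold PquotA, PquotB. replace (w^4) with (w^2*w^2) by ring. replace (w^6) with (w^2*w^2*w^2) by ring.
assert (0 <= w^2) by apply pow2_ge_0. set (z := w^2) in *. split; [|split].
- nra.
- assert (0 <= z*((3*z-5)*(z-1))) by (apply Rmult_le_pos; nra). nra.
- assert (0 <= z*z*(2/3 - z/4)) by (apply Rmult_le_pos; nra). nra.
Qed.

Lemma Pquot_bounds s w : 0 < s < 1 -> w^2 <= 1 ->
  Pquot s w <= 1 /\ w^2/12 + (1-s)/4 <= Pquot s w /\ Pquot s w <= w^2/2 + (1-s).
Proof.
intros. pose proof (PquotB_bounds w H0). pose proof (PquotA_bounds w H0). unfold Pquot.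
replace (PquotA w - s * PquotB w) with ((PquotA w - PquotB w) + (1-s)*PquotB w) by ring.
assert (0 <= w^2) by apply pow2_ge_0. repeat split; nra.
Qed.

(** * Descent time along a level line *)

(* [tau lam s w] is the time the trajectory from [(s, 0)] takes to reach
   [u = s (1 - w^2)] (see [sol_tau_wcoord]). *)
Definition dtau lam s w : R := 2 / sqrt (2*lam*s*Pquot s w).
Definition tau lam s x : R := RInt (dtau lam s) 0 x.

Section Tau.
Variables lam s : R.
Hypothesis Hlam : 0 < lam.
Hypothesis Hs : 0 < s < 1.

Lemma Pquot_scaled_pos w : 0 < 2*lam*s*Pquot s w.
Proof. pose proof (Pquot_pos s w Hs). apply Rmult_lt_0_compat; [nra|auto]. Qed.

Lemma dtau_pos w : 0 < dtau lam s w.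
Proof. apply Rdiv_lt_0_compat; [lra|]. apply sqrt_lt_R0, Pquot_scaled_pos. Qed.

Lemma dtau_continuous w : continuous (dtau lam s) w.
Proof.
apply (@ex_derive_continuous R_AbsRing R_NormedModule).
pose proof (Pquot_scaled_pos w). unfold dtau, Pquot, PquotA, PquotB in *.
auto_derive. split; [lra|split; [|auto]]. apply Rgt_not_eq, sqrt_lt_R0. lra.
Qed.

Lemma ex_RInt_dtau a b : ex_RInt (dtau lam s) a b.
Proof. apply ex_RInt_continuous_R; intros; apply dtau_continuous. Qed.

Lemma is_derive_tau x : is_derive (tau lam s) x (dtau lam s x).
Proof.
apply (is_derive_RInt (dtau lam s) (tau lam s) 0); [|apply dtau_continuous].
apply filter_forall. intros. apply (@RInt_correct R_CompleteNormedModule), ex_RInt_dtau.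
Qed.

Lemma tau_continuity_pt x : continuity_pt (tau lam s) x.
Proof. eapply is_derive_continuity_pt, is_derive_tau. Qed.

Lemma tau_increasing x y : x < y -> tau lam s x < tau lam s y.
Proof.
intros. destruct (MVT_gen (tau lam s) x y (dtau lam s)) as [c [_ Hc]].
- intros; apply is_derive_tau.
- intros; apply tau_continuity_pt.
- pose proof (dtau_pos c). nra.
Qed.

Lemma tau_inj x y : tau lam s x = tau lam s y -> x = y.
Proof.
intros. destruct (Rtotal_order x y) as [H1|[H1|H1]]; auto; apply tau_increasing in H1; lra.
Qed.

Lemma tau_0 : tau lam s 0 = 0.
Proof. unfold tau. rewrite RInt_point. reflexivity. Qed.

Lemma tau_surjective a b t : a <= b -> tau lam s a <= t <= tau lam s b ->
  exists w, a <= w <= b /\ tau lam s w = t.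
Proof.
intros Hab Ht. destruct (IVT_gen (tau lam s) a b t) as [w Hw].
- intro; apply tau_continuity_pt.
- rewrite Rmin_left, Rmax_right; lra.
- exists w. rewrite Rmin_left, Rmax_right in Hw; lra.
Qed.
End Tau.

(* Inverse of [tau lam s] on [-1, 2]; any interval containing [0, 1] in its interior
   would do, as the inverse must be differentiable at [tau lam s 0] and [tau lam s 1]. *)
Definition tau_inv lam s t :=
  epsilon (inhabits 0) (fun w => -1 <= w <= 2 /\ tau lam s w = t).

Section TauInv.
Variables lam s : R.
Hypothesis Hlam : 0 < lam.
Hypothesis Hs : 0 < s < 1.

Lemma tau_inv_spec t : tau lam s (-1) <= t <= tau lam s 2 ->
  -1 <= tau_inv lam s t <= 2 /\ tau lam s (tau_inv lam s t) = t.
Proof. intros. unfold tau_inv. apply epsilon_spec, tau_surjective; auto; lra. Qed.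

Lemma tau_inv_tau w : -1 <= w <= 2 -> tau_inv lam s (tau lam s w) = w.
Proof.
intros. apply (tau_inj lam s); auto. apply tau_inv_spec.
split; destruct (Req_dec w (-1)), (Req_dec w 2); subst; try lra;
  apply Rlt_le, tau_increasing; auto; lra.
Qed.

Lemma tau_inv_continuity_pt t : tau lam s (-1) < t < tau lam s 2 ->
  continuity_pt (tau_inv lam s) t.
Proof.
intros. apply (Ranalysis5.continuity_pt_recip_interv (tau lam s) (tau_inv lam s) (-1) 2);
  auto; try lra.
- intros. apply tau_increasing; auto.
- intros. unfold comp, id. apply tau_inv_spec; lra.
- intros. apply tau_inv_spec; lra.
- intros. apply tau_continuity_pt; auto.
Qed.

Lemma is_derive_tau_inv t : tau lam s (-1) < t < tau lam s 2 ->
  is_derive (tau_inv lam s) t (sqrt (2*lam*s*Pquot s (tau_inv lam s t)) / 2).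
Proof.
intros Ht. set (w := tau_inv lam s t).
assert (Hder : forall a, tau_inv lam s (tau lam s (-1)) <= a <= tau_inv lam s (tau lam s 2) ->
                 derivable_pt (tau lam s) a).
{ intros. apply ex_derive_Reals_0. eexists; apply is_derive_tau; auto. }
assert (Hw : tau_inv lam s (tau lam s (-1)) <= w <= tau_inv lam s (tau lam s 2)).
{ rewrite !tau_inv_tau by lra. apply tau_inv_spec; lra. }
pose proof (Ranalysis5.derivable_pt_lim_recip_interv (tau lam s) (tau_inv lam s) _ _ t Hder
  (tau_inv_continuity_pt t Ht) (tau_increasing lam s Hlam Hs (-1) 2 ltac:(lra)) Ht Hw) as H.
assert (E : derive_pt (tau lam s) w (Hder w Hw) = dtau lam s w).
{ apply derive_pt_eq_0, is_derive_Reals, is_derive_tau; auto. }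
fold w in H. rewrite E in H. apply is_derive_Reals.
replace (sqrt (2*lam*s*Pquot s w) / 2) with (1 / dtau lam s w).
2:{ unfold dtau. pose proof (sqrt_lt_R0 _ (Pquot_scaled_pos lam s Hlam Hs w)). field. lra. }
apply H.
- intros. unfold comp, id. apply tau_inv_spec; lra.
- pose proof (dtau_pos lam s Hlam Hs w). lra.
Qed.
End TauInv.

Definition usol lam s t := s * (1 - tau_inv lam s t ^ 2).
Definition vsol lam s t :=
  - s * tau_inv lam s t * sqrt (2*lam*s*Pquot s (tau_inv lam s t)).

Section ExplicitSolution.
Variables lam s : R.
Hypothesis Hlam : 0 < lam.
Hypothesis Hs : 0 < s < 1.

Lemma is_derive_vsol_profile w :
  is_derive (fun w => - s * w * sqrt (2*lam*s*Pquot s w)) w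
    (- s * sqrt (2*lam*s*Pquot s w)
     - s * w * (2*lam*s*dPquot s w) / (2 * sqrt (2*lam*s*Pquot s w))).
Proof.
pose proof (Pquot_scaled_pos lam s Hlam Hs w) as HQ.
auto_derive.
- split; [exists (dPquot s w); apply is_derive_Pquot|split; [lra|auto]].
- replace (Derive (fun x => Pquot s x) w) with (dPquot s w)
    by (symmetry; apply is_derive_unique, is_derive_Pquot).
  field. apply Rgt_not_eq, sqrt_lt_R0. lra.
Qed.

Lemma is_derive_usol t : tau lam s (-1) < t < tau lam s 2 ->
  is_derive (usol lam s) t (vsol lam s t).
Proof.
intros Ht.
assert (Du : forall w, is_derive (fun w => s*(1-w^2)) w (-2*s*w)) by (intros; auto_derive; auto; ring).
pose proof (is_derive_comp _ _ t _ _ (Du (tau_inv lam s t)) (is_derive_tau_inv lam s Hlam Hs t Ht)) as D.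
unfold vsol. set (w := tau_inv lam s t) in *.
replace (- s * w * sqrt (2*lam*s*Pquot s w))
  with (scal (sqrt (2*lam*s*Pquot s w) / 2) (-2*s*w)); [exact D|].
unfold scal; simpl; unfold mult; simpl. field.
Qed.

Lemma is_derive_vsol t : tau lam s (-1) < t < tau lam s 2 ->
  is_derive (vsol lam s) t (- lam * g (usol lam s t)).
Proof.
intros Ht.
pose proof (is_derive_comp _ _ t _ _ (is_derive_vsol_profile (tau_inv lam s t))
  (is_derive_tau_inv lam s Hlam Hs t Ht)) as D.
set (w := tau_inv lam s t) in *.
pose proof (Pquot_scaled_pos lam s Hlam Hs w) as HQ.
pose proof (sqrt_lt_R0 _ HQ) as Hr. pose proof (sqrt_sqrt _ (Rlt_le _ _ HQ)) as Hrr.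
set (r := sqrt (2*lam*s*Pquot s w)) in *.
match goal with |- is_derive _ _ ?l =>
  replace l with (scal (r / 2) (- s * r - s * w * (2*lam*s*dPquot s w) / (2 * r))); [exact D|] end.
unfold scal; simpl; unfold mult; simpl. unfold g, usol. fold w.
replace (- lam * ((s * (1 - w^2))^2 * (1 - s * (1 - w^2))))
  with (- lam * s^2 * ((1 - w^2)^2 * (1 - s + s * w^2))) by ring.
rewrite <- Pquot_dPquot. field_simplify; [|lra].
replace (r^2) with (r*r) by ring. rewrite Hrr. field.
Qed.

Lemma usol_vsol_is_sol T : 0 <= T <= tau lam s 1 -> is_sol lam s T (usol lam s) (vsol lam s).
Proof.
intros HT.
assert (H0 : tau_inv lam s 0 = 0) by (rewrite <- (tau_0 lam s) at 1; apply tau_inv_tau; lra).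
split; [|split].
- unfold usol. rewrite H0. ring.
- unfold vsol. rewrite H0. ring.
- intros t Ht. assert (tau lam s (-1) < t < tau lam s 2).
  { pose proof (tau_increasing lam s Hlam Hs (-1) 0 ltac:(lra)).
    pose proof (tau_increasing lam s Hlam Hs 1 2 ltac:(lra)). rewrite tau_0 in *. lra. }
  split; [apply is_derive_usol|apply is_derive_vsol]; auto.
Qed.
End ExplicitSolution.

(** * Solutions of the Cauchy problem *)

Definition wcoord s x := sqrt ((s - x) / s).

Section Solution.
Variables lam s T : R.
Variables u v : R -> R.
Hypothesis Hlam : 0 < lam.
Hypothesis Hs : 0 < s < 1.
Hypothesis Hsol : is_sol lam s T u v.

Let du t : 0 <= t <= T -> is_derive u t (v t).
Proof. intros; apply Hsol; auto. Qed.
Let dv t : 0 <= t <= T -> is_derive v t (- lam * g (u t)).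
Proof. intros; apply Hsol; auto. Qed.
Let u0 : u 0 = s. Proof. apply Hsol. Qed.
Let v0 : v 0 = 0. Proof. apply Hsol. Qed.
Let ucont t : 0 <= t <= T -> continuity_pt u t.
Proof. intros; eapply is_derive_continuity_pt, du; eauto. Qed.

Lemma sol_energy t : 0 <= t <= T -> v t ^ 2 = 2 * lam * (G s - G (u t)).
Proof.
intros Ht.
set (E := fun t => v t ^ 2 + 2 * lam * G (u t)).
assert (DE : forall x, 0 <= x <= T -> is_derive E x 0).
{ intros x Hx. unfold E.
  pose proof (is_derive_comp G u x _ _ (is_derive_G (u x)) (du x Hx)) as D1.
  pose proof (is_derive_pow v 2 x _ (dv x Hx)) as D2.
  pose proof (is_derive_plus _ _ x _ _ D2 (is_derive_scal _ x (2*lam) _ D1)) as D3.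
  match type of D3 with is_derive _ _ ?l => replace 0 with l; [exact D3|] end.
  simpl. unfold scal, plus, mult; simpl. unfold mult; simpl. unfold g. ring. }
assert (E t = E 0).
{ apply is_derive_0_eq; [lra|intros; apply DE; lra|].
  intros; eapply is_derive_continuity_pt, DE; lra. }
unfold E in H. rewrite u0, v0 in H. lra.
Qed.

Lemma sol_u_lt_1 t : 0 <= t <= T -> u t < 1.
Proof.
intros Ht. destruct (Rlt_le_dec (u t) 1) as [|Hu]; auto. exfalso.
assert (exists z, 0 <= z <= t /\ u z = 1) as [z [Hz Hz1]].
{ destruct (IVT_interval u 0 t 1) as [z Hz]; [lra|intros; apply ucont; lra| |exists z; lra].
  rewrite u0, Rmin_left, Rmax_right; lra. }
pose proof (sol_energy z ltac:(lra)) as He. rewrite Hz1 in He.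
assert (G s < G 1) by (apply G_increasing; lra).
pose proof (pow2_ge_0 (v z)). nra.
Qed.

Lemma sol_u_le_s t : 0 <= t <= T -> u t <= s.
Proof.
intros Ht. destruct (Rle_dec (u t) s) as [|Hu]; auto. exfalso.
pose proof (sol_energy t Ht). pose proof (sol_u_lt_1 t Ht).
assert (G s < G (u t)) by (apply G_increasing; lra).
pose proof (pow2_ge_0 (v t)). nra.
Qed.

Lemma sol_v_eq_0 t : 0 <= t <= T -> v t = 0 -> u t = s.
Proof.
intros Ht Hv. pose proof (sol_energy t Ht) as He. rewrite Hv in He.
pose proof (sol_u_le_s t Ht).
destruct (Req_dec (u t) s); auto. assert (G (u t) < G s) by (apply G_increasing; lra). nra.
Qed.

Lemma sol_v_nonpos t : 0 <= t <= T -> v t <= 0.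
Proof.
intros Ht. destruct (Rle_dec (v t) 0) as [|Hv]; auto. exfalso.
assert (Hut : u t < s).
{ pose proof (sol_u_le_s t Ht). destruct (Req_dec (u t) s) as [E|]; [|lra].
  pose proof (sol_energy t Ht) as He. rewrite E in He.
  assert (0 < v t ^ 2) by (apply pow_lt; lra). lra. }
assert (Ht0 : 0 < t) by (destruct (Req_dec t 0) as [->|]; [rewrite u0 in Hut|]; lra).
destruct (continuity_ab_min u 0 t ltac:(lra)) as [c [Hmin Hc]]; [intros; apply ucont; lra|].
assert (Hc0 : 0 < c) by (specialize (Hmin t ltac:(lra)); destruct (Req_dec c 0) as [->|]; lra).
assert (v c <= 0).
{ apply (is_derive_min_right u 0 c); [lra|intros; apply Hmin; lra|apply du; lra]. }
destruct (Req_dec c t) as [->|Hct]; [lra|].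
assert (0 <= v c).
{ apply (is_derive_min_left u c t); [lra|intros; apply Hmin; lra|apply du; lra]. }
pose proof (sol_v_eq_0 c ltac:(lra) ltac:(lra)). specialize (Hmin t ltac:(lra)). lra.
Qed.

Lemma sol_u_nonincreasing a b : 0 <= a <= b -> b <= T -> u b <= u a.
Proof.
intros. destruct (Req_dec a b) as [->|]; [lra|].
destruct (MVT_gen u a b v) as [c [Hc Hc']].
- intros x Hx. rewrite Rmin_left, Rmax_right in Hx by lra. apply du; lra.
- intros x Hx. rewrite Rmin_left, Rmax_right in Hx by lra. apply ucont; lra.
- rewrite Rmin_left, Rmax_right in Hc by lra. pose proof (sol_v_nonpos c ltac:(lra)). nra.
Qed.

Lemma sol_v_neg t : 0 < t <= T -> v t < 0.
Proof.
intros Ht. destruct (Rlt_le_dec (v t) 0) as [|Hv]; auto. exfalso.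
pose proof (sol_v_eq_0 t ltac:(lra) ltac:(pose proof (sol_v_nonpos t ltac:(lra)); lra)) as Hut.
assert (Hg : 0 < g s) by (unfold g; pose proof (pow_lt s 2 ltac:(lra)); nra).
destruct (is_derive_neg_locally v 0 _ (dv 0 ltac:(lra)) ltac:(rewrite u0; nra)) as [d [Hd Hloc]].
destruct (Rmin_pos_bounds (d/2) (t/2) ltac:(lra) ltac:(lra)) as [Hh [Hh1 Hh2]].
set (h := Rmin (d/2) (t/2)) in *.
destruct (MVT_cor2 u v 0 h ltac:(lra)) as [c [Hc1 Hc2]].
{ intros c Hc. apply is_derive_Reals, du; lra. }
assert (v c < 0) by (specialize (Hloc c ltac:(lra)); rewrite v0, Rplus_0_l in Hloc; lra).
rewrite u0 in Hc1. pose proof (sol_u_nonincreasing h t ltac:(lra) ltac:(lra)). nra.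
Qed.

Lemma sol_u_lt_s t : 0 < t <= T -> u t < s.
Proof.
intros. pose proof (sol_v_neg t H) as Hv. pose proof (sol_energy t ltac:(lra)) as He.
pose proof (sol_u_le_s t ltac:(lra)).
destruct (Req_dec (u t) s) as [E|]; [|lra]. rewrite E in He.
assert (0 < v t * v t) by nra. simpl in He. lra.
Qed.

Lemma sol_u_wcoord t : 0 <= t <= T -> u t = s * (1 - wcoord s (u t) ^ 2).
Proof.
intros. unfold wcoord. rewrite <- Rsqr_pow2, Rsqr_sqrt; [field; lra|].
pose proof (sol_u_le_s t H). apply Rdiv_le_0_compat; lra.
Qed.

Lemma sol_wcoord_pos t : 0 < t <= T -> 0 < wcoord s (u t).
Proof.
intros. apply sqrt_lt_R0. pose proof (sol_u_lt_s t H). apply Rdiv_lt_0_compat; lra.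
Qed.

Lemma sol_v_wcoord t : 0 < t <= T ->
  - v t = s * wcoord s (u t) * sqrt (2*lam*s*Pquot s (wcoord s (u t))).
Proof.
intros Ht. set (w := wcoord s (u t)).
pose proof (sol_energy t ltac:(lra)) as He. rewrite (sol_u_wcoord t), G_sub_Pquot in He by lra.
fold w in He.
pose proof (sol_v_neg t Ht). pose proof (sol_wcoord_pos t Ht). fold w in H0.
pose proof (Pquot_scaled_pos lam s Hlam Hs w) as HQ.
pose proof (sqrt_lt_R0 _ HQ). pose proof (sqrt_sqrt _ (Rlt_le _ _ HQ)).
set (r := sqrt (2*lam*s*Pquot s w)) in *.
apply Rsqr_inj; [lra|apply Rlt_le, Rmult_lt_0_compat; [apply Rmult_lt_0_compat|]; lra|].
rewrite <- Rsqr_neg, !Rsqr_pow2, He.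
replace ((s * w * r)^2) with (s^2 * w^2 * (r*r)) by ring. rewrite H2. ring.
Qed.

Lemma sol_wcoord_continuity_pt t : 0 <= t <= T -> continuity_pt (fun x => wcoord s (u x)) t.
Proof.
intros Ht. unfold wcoord. apply (continuity_pt_comp (fun x => (s - u x)/s) sqrt).
- apply continuity_pt_mult; [apply continuity_pt_minus|]; auto;
    apply continuity_pt_const; intros ? ?; auto.
- apply continuity_pt_sqrt. pose proof (sol_u_le_s t Ht). apply Rdiv_le_0_compat; lra.
Qed.

Lemma sol_is_derive_tau_wcoord t : 0 < t < T ->
  is_derive (fun x => tau lam s (wcoord s (u x))) t 1.
Proof.
intros Ht. set (w := wcoord s (u t)).
assert (D1 : is_derive (fun x => (s - u x)/s) t (- v t / s)).
{ pose proof (du t ltac:(lra)) as D. auto_derive; [eexists; eauto|].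
  replace (Derive (fun x => u x) t) with (v t) by (symmetry; apply is_derive_unique; auto).
  field. lra. }
assert (Hp : 0 < (s - u t)/s) by (pose proof (sol_u_lt_s t ltac:(lra)); apply Rdiv_lt_0_compat; lra).
pose proof (is_derive_comp (tau lam s) (fun x => wcoord s (u x)) t _ _
  (is_derive_tau lam s Hlam Hs w) (is_derive_sqrt _ t _ D1 Hp)) as D.
match type of D with is_derive _ _ ?l => replace 1 with l; [exact D|] end.
unfold scal, mult; simpl. unfold mult; simpl.
pose proof (sol_v_wcoord t ltac:(lra)) as Hv. fold w in Hv.
pose proof (sol_wcoord_pos t ltac:(lra)). fold w in H.
pose proof (sqrt_lt_R0 _ (Pquot_scaled_pos lam s Hlam Hs w)).
unfold dtau. set (r := sqrt (2*lam*s*Pquot s w)) in *.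
replace (- v t) with (s * w * r) by lra. change (sqrt ((s - u t) / s)) with w.
field. lra.
Qed.

Lemma sol_tau_wcoord t : 0 <= t <= T -> tau lam s (wcoord s (u t)) = t.
Proof.
intros Ht. set (h := fun x => tau lam s (wcoord s (u x)) - x).
assert (h t = h 0).
{ apply is_derive_0_eq; [lra| |].
  - intros x Hx.
    pose proof (is_derive_minus _ _ x _ _ (sol_is_derive_tau_wcoord x ltac:(lra)) (is_derive_id x)) as D.
    match type of D with is_derive _ _ ?l => replace 0 with l; [exact D|] end.
    unfold minus, plus, opp, one; simpl. ring.
  - intros x Hx. apply continuity_pt_minus; [|apply continuity_pt_id].
    apply (continuity_pt_comp (fun x => wcoord s (u x)) (tau lam s));
      [apply sol_wcoord_continuity_pt; lra|apply tau_continuity_pt; auto]. }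
unfold h, wcoord in H. rewrite u0, Rminus_diag, Rdiv_0_l, sqrt_0, tau_0 in H by auto.
unfold wcoord. lra.
Qed.

Lemma sol_hit_time t : 0 <= t <= T -> u t = 0 -> t = tau lam s 1.
Proof.
intros Ht Hu. rewrite <- (sol_tau_wcoord t Ht). unfold wcoord. rewrite Hu.
replace ((s - 0) / s) with 1 by (field; lra). rewrite sqrt_1. reflexivity.
Qed.

Lemma sol_wcoord_lt_1 t : 0 <= t <= T -> t < tau lam s 1 -> wcoord s (u t) < 1.
Proof.
intros Ht Htau. rewrite <- (sol_tau_wcoord t Ht) in Htau.
destruct (Rlt_le_dec (wcoord s (u t)) 1) as [|H1]; auto.
destruct (Req_dec (wcoord s (u t)) 1) as [E|]; [rewrite E in Htau; lra|].
pose proof (tau_increasing lam s Hlam Hs 1 (wcoord s (u t)) ltac:(lra)). lra.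
Qed.

Lemma sol_v_formula t : 0 <= t <= T -> v t = - sqrt (2 * lam * (G s - G (u t))).
Proof.
intros. rewrite <- sol_energy by auto. pose proof (sol_v_nonpos t H).
rewrite <- Rsqr_pow2, sqrt_Rsqr_abs, Rabs_left1 by lra. ring.
Qed.
End Solution.

Lemma T0_eq lam s : 0 < lam -> 0 < s < 1 -> T0 lam s = tau lam s 1.
Proof.
intros Hlam Hs. unfold T0.
assert (Hset : forall t, (0 <= t /\ on_halfline_at lam s t) <-> t = tau lam s 1).
{ intros t; split.
  - intros [Ht [u [v [Hsol [Hu Hv]]]]]. eapply sol_hit_time; eauto. lra.
  - intros ->. pose proof (tau_increasing lam s Hlam Hs 0 1 ltac:(lra)). rewrite tau_0 in H.
    split; [lra|]. exists (usol lam s), (vsol lam s).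
    split; [apply usol_vsol_is_sol; auto; lra|].
    assert (E : tau_inv lam s (tau lam s 1) = 1) by (apply tau_inv_tau; auto; lra).
    unfold usol, vsol. rewrite E. split; [ring|].
    pose proof (sqrt_lt_R0 _ (Pquot_scaled_pos lam s Hlam Hs 1)). nra. }
rewrite (is_glb_Rbar_unique _ (tau lam s 1)); auto.
split.
- intros t Ht. apply Hset in Ht. subst. simpl. lra.
- intros b Hb. apply Hb, Hset. reflexivity.
Qed.

Lemma tau_scaling lam s w : 0 < lam -> 0 < s < 1 -> tau lam s w = tau 1 s w / sqrt lam.
Proof.
intros Hlam Hs. pose proof (sqrt_lt_R0 lam Hlam).
unfold tau. rewrite (RInt_ext (dtau lam s) (fun x => scal (/ sqrt lam) (dtau 1 s x))).
- rewrite (@RInt_scal R_CompleteNormedModule); [|apply ex_RInt_dtau; auto; lra].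
  unfold scal; simpl; unfold mult; simpl. unfold Rdiv. apply Rmult_comm.
- intros x _. unfold scal; simpl; unfold mult; simpl. unfold dtau.
  replace (2 * lam * s * Pquot s x) with (lam * (2 * 1 * s * Pquot s x)) by ring.
  pose proof (sqrt_lt_R0 _ (Pquot_scaled_pos 1 s ltac:(lra) Hs x)).
  rewrite sqrt_mult_alt by lra. field. lra.
Qed.

(* The point of abscissa [s (1 - w^2)] on the lower half of the level line through [(s, 0)]. *)
Definition level_point lam s w : R * R :=
  (s * (1 - w^2), - sqrt (2 * lam * (G s - G (s * (1 - w^2))))).

Lemma sol_level_point lam s sigma u v : 0 < lam -> 0 < s < 1 -> 0 < sigma < tau lam s 1 ->
  is_sol lam s sigma u v ->
  exists w, 0 < w < 1 /\ tau 1 s w = sigma * sqrt lam /\ (u sigma, v sigma) = level_point lam s w.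
Proof.
intros Hlam Hs Hsig Hsol. exists (wcoord s (u sigma)).
pose proof (sol_tau_wcoord lam s sigma u v Hlam Hs Hsol sigma ltac:(lra)) as Htau.
rewrite tau_scaling in Htau by auto.
split; [split|split].
- eapply sol_wcoord_pos; eauto; lra.
- eapply sol_wcoord_lt_1; eauto; lra.
- pose proof (sqrt_lt_R0 lam Hlam). rewrite <- Htau at 2. field. lra.
- unfold level_point. rewrite <- (sol_u_wcoord lam s sigma u v Hlam Hs Hsol sigma) by lra.
  rewrite (sol_v_formula lam s sigma u v Hlam Hs Hsol sigma) by lra. reflexivity.
Qed.

Lemma Gamma0_iff lam sigma p : 0 < lam -> 0 < sigma ->
  Gamma0 lam sigma p <-> exists s w, 0 < s < 1 /\ 0 < w < 1 /\
    tau 1 s w = sigma * sqrt lam /\ p = level_point lam s w.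
Proof.
intros Hlam Hsig. pose proof (sqrt_lt_R0 lam Hlam). split.
- intros [s [[Hs HT] [u [v [Hsol ->]]]]]. rewrite T0_eq in HT by auto.
  destruct (sol_level_point lam s sigma u v Hlam Hs ltac:(lra) Hsol) as [w Hw].
  exists s, w. tauto.
- intros [s [w [Hs [Hw [Htau ->]]]]].
  assert (HT : sigma < tau lam s 1).
  { rewrite tau_scaling by auto. apply (Rmult_lt_reg_r (sqrt lam)); auto.
    pose proof (tau_increasing 1 s ltac:(lra) Hs w 1 ltac:(lra)). field_simplify; lra. }
  exists s. split; [split; [auto|rewrite T0_eq; auto]|].
  exists (usol lam s), (vsol lam s).
  assert (Hsol : is_sol lam s sigma (usol lam s) (vsol lam s)) by (apply usol_vsol_is_sol; auto; lra).
  split; auto.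
  destruct (sol_level_point lam s sigma _ _ Hlam Hs ltac:(lra) Hsol) as [w' [_ [Htau' ->]]].
  rewrite <- Htau in Htau'. apply (tau_inj 1 s) in Htau'; [subst; reflexivity|lra|auto].
Qed.

(** * The normalised descent time *)

(* By [T0_eq] and [tau_scaling], [T0 lam s = T1 s / sqrt lam]. *)
Definition T1 (s : R) : R := tau 1 s 1.

Section TimeBounds.
Variable s : R.
Hypothesis Hs : 0 < s < 1.

Lemma dtau1_lower c : 0 <= c <= 1 -> 2 / sqrt (2*s) <= dtau 1 s c.
Proof.
intros. unfold dtau. pose proof (Pquot_bounds s c Hs ltac:(simpl; nra)).
pose proof (Pquot_scaled_pos 1 s ltac:(lra) Hs c).
apply Rmult_le_compat_l; [lra|]. apply Rinv_le_contravar; [apply sqrt_lt_R0; lra|].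
apply sqrt_le_1_alt. nra.
Qed.

Lemma dtau1_upper c : 1/2 <= c <= 1 -> dtau 1 s c <= 2 / sqrt (s/24).
Proof.
intros. unfold dtau. pose proof (Pquot_bounds s c Hs ltac:(simpl; nra)).
apply Rmult_le_compat_l; [lra|]. apply Rinv_le_contravar; [apply sqrt_lt_R0; lra|].
apply sqrt_le_1_alt. assert (1/48 <= Pquot s c) by (simpl in H0; nra). nra.
Qed.

Lemma T1_sub_tau w : 0 <= w <= 1 ->
  exists c, w <= c <= 1 /\ T1 s - tau 1 s w = dtau 1 s c * (1 - w).
Proof.
intros. destruct (MVT_gen (tau 1 s) w 1 (dtau 1 s)) as [c [Hc Hc']].
- intros; apply is_derive_tau; auto; lra.
- intros; apply tau_continuity_pt; auto; lra.
- rewrite Rmin_left, Rmax_right in Hc by lra. exists c. split; auto.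
Qed.

Lemma T1_sub_tau_lower w : 0 <= w <= 1 -> s * (1 - w^2) <= 2 * (T1 s - tau 1 s w).
Proof.
intros Hw. destruct (T1_sub_tau w Hw) as [c [Hc ->]].
pose proof (dtau1_lower c ltac:(lra)).
assert (1 < 2 / sqrt (2*s)).
{ assert (sqrt (2*s) < 2).
  { apply Rlt_le_trans with (sqrt (2*2)); [apply sqrt_lt_1_alt; lra|rewrite sqrt_square; lra]. }
  pose proof (sqrt_lt_R0 (2*s) ltac:(lra)).
  apply (Rmult_lt_reg_r (sqrt (2*s))); auto. field_simplify; lra. }
replace (s * (1 - w^2)) with ((1 - w) * (s * (1 + w))) by ring.
apply Rle_trans with ((1 - w) * 2); [apply Rmult_le_compat_l; nra|nra].
Qed.

Lemma T1_sub_tau_upper w : 0 <= w <= 1 -> 1 - w^2 <= 3/4 ->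
  T1 s - tau 1 s w <= 2 / sqrt (s/24) * (1 - w^2).
Proof.
intros Hw Hw2. destruct (T1_sub_tau w Hw) as [c [Hc ->]].
pose proof (dtau1_upper c ltac:(simpl in Hw2; nra)).
pose proof (dtau_pos 1 s ltac:(lra) Hs c).
apply Rle_trans with (2 / sqrt (s/24) * (1 - w)); [apply Rmult_le_compat_r; lra|].
apply Rmult_le_compat_l; [lra|]. simpl. nra.
Qed.

Lemma T1_ge_inv_sqrt : 2 / sqrt (2*s) <= T1 s.
Proof.
destruct (T1_sub_tau 0 ltac:(lra)) as [c [Hc Hsub]]. rewrite tau_0 in Hsub by (auto; lra).
pose proof (dtau1_lower c Hc). lra.
Qed.

Lemma T1_ge_log a : a = sqrt (2*(1-s)) -> a < 1 -> - sqrt 2 * ln a <= T1 s.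
Proof.
intros Ha Ha1.
assert (Ha0 : 0 < a) by (subst; apply sqrt_lt_R0; lra).
pose proof (sqrt_lt_R0 2 ltac:(lra)) as Hs2.
unfold T1, tau. rewrite <- (RInt_Chasles (V := R_CompleteNormedModule) _ 0 a 1)
  by (apply ex_RInt_dtau; lra).
unfold plus; simpl.
assert (0 <= RInt (dtau 1 s) 0 a).
{ apply Rlt_le, RInt_gt_0; auto. intros; apply dtau_pos; lra. intros; apply dtau_continuous; lra. }
assert (HI : is_RInt (fun w => sqrt 2 / w) a 1 (minus (sqrt 2 * ln 1) (sqrt 2 * ln a))).
{ apply (is_RInt_derive (V := R_CompleteNormedModule) (fun w => sqrt 2 * ln w)).
  - intros x Hx. rewrite Rmin_left, Rmax_right in Hx by lra. auto_derive; [lra|field; lra].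
  - intros x Hx. rewrite Rmin_left, Rmax_right in Hx by lra.
    apply (@ex_derive_continuous R_AbsRing R_NormedModule). auto_derive. lra. }
assert (RInt (fun w => sqrt 2 / w) a 1 <= RInt (dtau 1 s) a 1).
{ apply RInt_le; [lra|eexists; eauto|apply ex_RInt_dtau; lra|].
  intros w Hw. unfold dtau. pose proof (Pquot_bounds s w Hs ltac:(simpl; nra)).
  pose proof (Pquot_scaled_pos 1 s ltac:(lra) Hs w).
  assert (sqrt (2*1*s*Pquot s w) <= sqrt 2 * w).
  { replace (sqrt 2 * w) with (sqrt (2*(w*w))) by (rewrite sqrt_mult_alt, sqrt_square; lra).
    apply sqrt_le_1_alt. assert (a * a = 2*(1-s)) by (subst; apply sqrt_sqrt; lra).
    simpl in H0. nra. }
  assert (0 < sqrt (2*1*s*Pquot s w)) by (apply sqrt_lt_R0; lra).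
  replace (sqrt 2 / w) with (2 / (sqrt 2 * w)).
  2:{ rewrite <- (sqrt_sqrt 2) at 1 by lra. field. split; lra. }
  apply Rmult_le_compat_l; [lra|]. apply Rinv_le_contravar; auto. }
rewrite (is_RInt_unique _ _ _ _ HI) in H0. unfold minus, plus, opp in H0; simpl in H0.
rewrite ln_1 in H0. lra.
Qed.
End TimeBounds.

Lemma T1_large_near_0 M : exists eta, 0 < eta < 1/2 /\ forall s, 0 < s <= eta -> M < T1 s.
Proof.
set (K := Rabs M + 1). assert (HK : 1 <= K) by (unfold K; pose proof (Rabs_pos M); lra).
exists (1 / (4 * (K*K))). split.
- split; [apply Rdiv_lt_0_compat; nra|].
  apply (Rmult_lt_reg_l (4*(K*K))); [nra|]. field_simplify; nra.
- intros s Hs.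
  assert (1/(4*(K*K)) <= 1/4) by (apply Rmult_le_compat_l; [lra|apply Rinv_le_contravar; nra]).
  pose proof (T1_ge_inv_sqrt s ltac:(lra)).
  assert (sqrt (2*s) <= 1 / K).
  { rewrite <- (sqrt_pow2 (1/K)) by (apply Rlt_le, Rdiv_lt_0_compat; lra). apply sqrt_le_1_alt.
    replace ((1/K)^2) with (1/(K*K)) by (field; lra).
    assert (1/(2*(K*K)) <= 1/(K*K)) by (apply Rmult_le_compat_l; [lra|apply Rinv_le_contravar; nra]).
    replace (1 / (4 * (K * K))) with (1/(2*(K*K)) / 2) in Hs by (field; lra). lra. }
  assert (0 < sqrt (2*s)) by (apply sqrt_lt_R0; lra).
  assert (2 * K <= 2 / sqrt (2*s)).
  { apply (Rmult_le_reg_r (sqrt (2*s))); auto. field_simplify; [|lra].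
    apply (Rmult_le_compat_l K) in H1; [|lra]. replace (K * (1/K)) with 1 in H1 by (field; lra). lra. }
  pose proof (Rle_abs M). unfold K in *. lra.
Qed.

Lemma T1_large_near_1 M : exists eta, 0 < eta < 1 /\ forall s, 1 - eta < s < 1 -> M < T1 s.
Proof.
set (c := exp (- (Rabs M + 1) / sqrt 2)).
pose proof (sqrt_lt_R0 2 ltac:(lra)) as Hs2.
assert (Hc0 : 0 < c) by apply exp_pos.
assert (Hc1 : c < 1).
{ unfold c. apply (Rlt_le_trans _ (exp 0)); [|rewrite exp_0; lra]. apply exp_increasing.
  pose proof (Rabs_pos M).
  assert (0 < (Rabs M + 1) / sqrt 2) by (apply Rdiv_lt_0_compat; lra).
  replace (- (Rabs M + 1) / sqrt 2) with (- ((Rabs M + 1) / sqrt 2)) by (field; lra). lra. }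
assert (0 < c*c < 1) by (split; nra).
exists (c^2/2). split; [simpl; lra|].
intros s Hs. set (a := sqrt (2*(1-s))).
assert (a < c).
{ unfold a. rewrite <- (sqrt_pow2 c) by lra. apply sqrt_lt_1_alt. simpl in *. lra. }
assert (0 < a) by (apply sqrt_lt_R0; lra).
pose proof (T1_ge_log s ltac:(lra) a eq_refl ltac:(lra)).
assert (Hln : ln a < ln c) by (apply ln_increasing; lra).
unfold c in Hln. rewrite ln_exp in Hln.
assert (Rabs M + 1 < - sqrt 2 * ln a).
{ apply (Rmult_lt_compat_l (sqrt 2)) in Hln; auto.
  replace (sqrt 2 * (- (Rabs M + 1) / sqrt 2)) with (- (Rabs M + 1)) in Hln by (field; lra). lra. }
pose proof (Rle_abs M). lra.
Qed.

Lemma dtau1_lipschitz a b s s' w : 0 < a -> a <= s <= b -> a <= s' <= b -> b < 1 -> 0 <= w <= 1 ->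
  Rabs (dtau 1 s w - dtau 1 s' w) <= 12 / ((a*(1-b)/2) * sqrt (a*(1-b)/2)) * Rabs (s - s').
Proof.
intros. unfold dtau.
assert (Hw : w^2 <= 1) by (simpl; nra).
pose proof (Pquot_bounds s w ltac:(lra) Hw). pose proof (Pquot_bounds s' w ltac:(lra) Hw).
pose proof (PquotA_bounds w Hw). pose proof (PquotB_bounds w Hw).
assert (Hm : 0 < a*(1-b)/2) by nra.
eapply Rle_trans; [apply (inv_sqrt_lipschitz _ _ (a*(1-b)/2)); auto; nra|].
replace (2 * 1 * s * Pquot s w - 2 * 1 * s' * Pquot s' w)
  with (2 * (s - s') * (PquotA w - (s + s') * PquotB w)) by (unfold Pquot; ring).
rewrite !Rabs_mult, (Rabs_right 2) by lra.
assert (Rabs (PquotA w - (s + s') * PquotB w) <= 3) by (apply Rabs_le; split; nra).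
pose proof (sqrt_lt_R0 _ Hm).
pose proof (Rabs_pos (s - s')). pose proof (Rabs_pos (PquotA w - (s + s') * PquotB w)).
unfold Rdiv.
assert (0 < / (a * (1 - b) * / 2 * sqrt (a * (1 - b) * / 2))).
{ apply Rinv_0_lt_compat. apply Rmult_lt_0_compat; lra. }
set (K := / (a * (1 - b) * / 2 * sqrt (a * (1 - b) * / 2))) in *.
assert (0 <= Rabs (s - s') * K) by (apply Rmult_le_pos; lra). nra.
Qed.

Lemma T1_lipschitz a b s s' : 0 < a -> a <= s <= b -> a <= s' <= b -> b < 1 ->
  Rabs (T1 s - T1 s') <= 12 / ((a*(1-b)/2) * sqrt (a*(1-b)/2)) * Rabs (s - s').
Proof.
intros. unfold T1, tau.
rewrite <- (RInt_minus (V := R_CompleteNormedModule)) by (apply ex_RInt_dtau; lra).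
set (L := 12 / ((a*(1-b)/2) * sqrt (a*(1-b)/2))).
replace (L * Rabs (s - s')) with ((1 - 0) * (L * Rabs (s - s'))) by ring.
apply abs_RInt_le_const; [lra| |].
- apply (ex_RInt_minus (V := R_NormedModule)); apply ex_RInt_dtau; lra.
- intros t Ht. unfold minus, plus, opp; simpl. apply dtau1_lipschitz; auto.
Qed.

Lemma T1_continuity_pt s0 : 0 < s0 < 1 -> continuity_pt T1 s0.
Proof.
intros Hs0 e He.
set (a := s0/2). set (b := (1+s0)/2).
set (L := 12 / ((a*(1-b)/2) * sqrt (a*(1-b)/2))).
assert (HL : 0 < L).
{ assert (0 < a*(1-b)/2) by (unfold a, b; nra).
  pose proof (sqrt_lt_R0 _ H). unfold L. apply Rdiv_lt_0_compat; nra. }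
destruct (Rmin_pos_bounds (s0/2) ((1-s0)/2) ltac:(lra) ltac:(lra)) as [Hd0 [Hd1 Hd2]].
destruct (Rmin_pos_bounds (Rmin (s0/2) ((1-s0)/2)) (e/L) Hd0 ltac:(apply Rdiv_lt_0_compat; lra))
  as [Hd [Hd3 Hd4]].
exists (Rmin (Rmin (s0/2) ((1-s0)/2)) (e / L)). split; auto.
intros s [_ Hs]. simpl in Hs. unfold R_dist in *.
assert (Hs1 : Rabs (s - s0) < Rmin (s0/2) ((1-s0)/2)) by lra.
assert (Hs2 : Rabs (s - s0) < e / L) by lra.
apply Rabs_def2 in Hs1.
eapply Rle_lt_trans; [apply (T1_lipschitz a b); unfold a, b; lra|].
fold L. apply (Rmult_lt_compat_l L) in Hs2; auto.
replace (L * (e/L)) with e in Hs2 by (field; lra). lra.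
Qed.

Lemma dtau1_strictly_convex a b th w : 0 < a < b -> b < 1 -> 0 < th < 1 -> 0 <= w <= 1 ->
  dtau 1 (th*a + (1-th)*b) w < th * dtau 1 a w + (1-th) * dtau 1 b w.
Proof.
intros. unfold dtau.
set (m := th*a + (1-th)*b).
assert (Hm : a < m < b) by (apply convex_comb_between; auto).
pose proof (Pquot_scaled_pos 1 a ltac:(lra) ltac:(lra) w) as Ha.
pose proof (Pquot_scaled_pos 1 b ltac:(lra) ltac:(lra) w) as Hb.
set (xa := 2*1*a*Pquot a w) in *. set (xb := 2*1*b*Pquot b w) in *.
set (xl := th * xa + (1-th) * xb).
assert (Hxl : 0 < xl) by (unfold xl; nra).
pose proof (PquotB_bounds w ltac:(simpl; nra)).
(* [s |-> 2 s Pquot s w] is concave: it lies above its chords by a positive gap. *)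
assert (Hgap : 2 * 1 * m * Pquot m w = xl + 2 * th * (1-th) * (a-b)^2 * PquotB w)
  by (unfold xl, xa, xb, m, Pquot; ring).
assert (0 < 2 * th * (1-th) * (a-b)^2 * PquotB w).
{ apply Rmult_lt_0_compat; [|lra]. apply Rmult_lt_0_compat; [nra|].
  replace ((a-b)^2) with ((b-a)^2) by ring. apply pow_lt. lra. }
assert (2 / sqrt (2 * 1 * m * Pquot m w) < 2 / sqrt xl).
{ apply Rmult_lt_compat_l; [lra|]. apply Rinv_lt_contravar.
  - apply Rmult_lt_0_compat; apply sqrt_lt_R0; lra.
  - apply sqrt_lt_1_alt; lra. }
pose proof (inv_sqrt_tangent xa xl Ha Hxl). pose proof (inv_sqrt_tangent xb xl Hb Hxl).
assert (th * ((xa - xl) / (xl * sqrt xl)) + (1-th) * ((xb - xl) / (xl * sqrt xl)) = 0).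
{ pose proof (sqrt_lt_R0 _ Hxl).
  replace (th * ((xa - xl) / (xl * sqrt xl)) + (1-th) * ((xb - xl) / (xl * sqrt xl)))
    with ((th*(xa-xl) + (1-th)*(xb-xl)) / (xl * sqrt xl)) by (field; nra).
  replace (th*(xa-xl) + (1-th)*(xb-xl)) with 0 by (unfold xl; ring). unfold Rdiv. ring. }
nra.
Qed.

Lemma T1_strictly_convex a b th : 0 < a < b -> b < 1 -> 0 < th < 1 ->
  T1 (th*a + (1-th)*b) < th * T1 a + (1-th) * T1 b.
Proof.
intros. unfold T1, tau.
assert (Hm : a < th*a + (1-th)*b < b) by (apply convex_comb_between; auto).
replace (th * RInt (dtau 1 a) 0 1 + (1 - th) * RInt (dtau 1 b) 0 1)
  with (RInt (fun w => plus (scal th (dtau 1 a w)) (scal (1-th) (dtau 1 b w))) 0 1).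
- apply RInt_lt; [lra| |intros; apply dtau_continuous; lra|].
  + intros. apply (continuous_plus (V := R_NormedModule));
      apply (continuous_scal_r (V := R_NormedModule)); apply dtau_continuous; lra.
  + intros. unfold plus, scal; simpl; unfold mult; simpl. apply dtau1_strictly_convex; lra.
- rewrite (RInt_plus (V := R_CompleteNormedModule)).
  + rewrite !(RInt_scal (V := R_CompleteNormedModule)); [reflexivity|apply ex_RInt_dtau; lra ..].
  + apply (ex_RInt_scal (V := R_NormedModule)), ex_RInt_dtau; lra.
  + apply (ex_RInt_scal (V := R_NormedModule)), ex_RInt_dtau; lra.
Qed.

Lemma T1_exceeds_near s0 d : 0 < s0 < 1 -> 0 < d ->
  exists s, 0 < s < 1 /\ Rabs (s - s0) < d /\ T1 s0 < T1 s.
Proof.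
intros Hs0 Hd.
destruct (exists_step_inside s0 d Hs0 Hd) as [h Hh].
pose proof (T1_strictly_convex (s0 - h) (s0 + h) (1/2) ltac:(lra) ltac:(lra) ltac:(lra)) as Hconv.
replace (1/2 * (s0 - h) + (1 - 1/2) * (s0 + h)) with s0 in Hconv by field.
destruct (Rlt_le_dec (T1 s0) (T1 (s0 - h))).
- exists (s0 - h). replace (s0 - h - s0) with (- h) by ring.
  rewrite Rabs_Ropp, Rabs_right by lra. repeat split; lra.
- exists (s0 + h). replace (s0 + h - s0) with h by ring.
  rewrite Rabs_right by lra. repeat split; lra.
Qed.

Lemma T1_pos s : 0 < s < 1 -> 0 < T1 s.
Proof.
intros. unfold T1. rewrite <- (tau_0 1 s) by (auto; lra). apply tau_increasing; auto; lra.
Qed.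

Lemma tau1_level s c : 0 < s < 1 -> 0 < c < T1 s -> exists w, 0 < w < 1 /\ tau 1 s w = c.
Proof.
intros Hs Hc. destruct (tau_surjective 1 s ltac:(lra) Hs 0 1 c) as [w [Hw Htau]].
- lra.
- rewrite tau_0 by (auto; lra). unfold T1 in Hc. lra.
- exists w. split; [|auto].
  destruct (Req_dec w 0) as [->|]; [rewrite tau_0 in Htau by (auto; lra); lra|].
  destruct (Req_dec w 1) as [->|]; [unfold T1 in Hc; lra|lra].
Qed.

Lemma T1_has_min : exists sm, 0 < sm < 1 /\ forall s, 0 < s < 1 -> T1 sm <= T1 s.
Proof.
destruct (T1_large_near_0 (T1 (1/2))) as [a [Ha Ha']].
destruct (T1_large_near_1 (T1 (1/2))) as [e [He He']].
destruct (continuity_ab_min T1 a (1 - e/2) ltac:(lra)) as [sm [Hm Hsm]].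
{ intros; apply T1_continuity_pt; lra. }
exists sm. split; [lra|]. intros s Hs.
assert (H12 : T1 sm <= T1 (1/2)) by (apply Hm; lra).
destruct (Rle_dec s a); [specialize (Ha' s ltac:(lra)); lra|].
destruct (Rle_dec s (1 - e/2)); [apply Hm; lra|].
specialize (He' s ltac:(lra)). lra.
Qed.

Section Minimum.
Variable sm : R.
Hypothesis Hsm : 0 < sm < 1.
Hypothesis Hmin : forall s, 0 < s < 1 -> T1 sm <= T1 s.

Lemma T1_gt_min s : 0 < s < 1 -> s <> sm -> T1 sm < T1 s.
Proof.
intros Hs Hne. destruct (Rtotal_order s sm) as [Hl|[He|Hg]]; [|lra|].
- pose proof (T1_strictly_convex s sm (1/2) ltac:(lra) ltac:(lra) ltac:(lra)).
  pose proof (convex_comb_between s sm (1/2) ltac:(lra) ltac:(lra)).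
  specialize (Hmin (1/2*s + (1-1/2)*sm) ltac:(lra)). lra.
- pose proof (T1_strictly_convex sm s (1/2) ltac:(lra) ltac:(lra) ltac:(lra)).
  pose proof (convex_comb_between sm s (1/2) ltac:(lra) ltac:(lra)).
  specialize (Hmin (1/2*sm + (1-1/2)*s) ltac:(lra)). lra.
Qed.

Lemma T1_min_unique s : 0 < s < 1 -> T1 s = T1 sm -> s = sm.
Proof.
intros Hs HT. destruct (Req_dec s sm) as [|Hne]; auto.
pose proof (T1_gt_min s Hs Hne). lra.
Qed.

Lemma T1_decreasing s s' : 0 < s -> s < s' -> s' <= sm -> T1 s' < T1 s.
Proof.
intros. destruct (Req_dec s' sm) as [->|]; [apply T1_gt_min; lra|].
set (th := (sm - s') / (sm - s)).
assert (Hth : 0 < th < 1).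
{ unfold th. split; [apply Rdiv_lt_0_compat; lra|].
  apply (Rmult_lt_reg_r (sm - s)); [lra|]. field_simplify; lra. }
assert (E : s' = th * s + (1 - th) * sm) by (unfold th; field; lra).
pose proof (T1_strictly_convex s sm th ltac:(lra) ltac:(lra) Hth). rewrite <- E in H3.
assert (T1 sm <= T1 s') by (apply Hmin; lra). nra.
Qed.

Lemma T1_increasing s s' : sm <= s -> s < s' -> s' < 1 -> T1 s < T1 s'.
Proof.
intros. destruct (Req_dec s sm) as [->|]; [apply T1_gt_min; lra|].
set (th := (s' - s) / (s' - sm)).
assert (Hth : 0 < th < 1).
{ unfold th. split; [apply Rdiv_lt_0_compat; lra|].
  apply (Rmult_lt_reg_r (s' - sm)); [lra|]. field_simplify; lra. }
assert (E : s = th * sm + (1 - th) * s') by (unfold th; field; lra).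
pose proof (T1_strictly_convex sm s' th ltac:(lra) ltac:(lra) Hth). rewrite <- E in H3.
assert (T1 sm <= T1 s) by (apply Hmin; lra). nra.
Qed.

Lemma T1_level_set c : T1 sm < c -> exists s0 s1, 0 < s0 < s1 /\ s1 < 1 /\
  forall s, 0 < s < 1 -> (T1 s = c <-> s = s0 \/ s = s1).
Proof.
intros Hc.
destruct (T1_large_near_0 c) as [a [Ha Ha']].
destruct (Rmin_pos_bounds a (sm/2) ltac:(lra) ltac:(lra)) as [Ha0 [Haa Hasm]].
set (a' := Rmin a (sm/2)) in *.
destruct (T1_large_near_1 c) as [e [He He']].
set (b := Rmax (1 - e/2) ((1+sm)/2)).
assert (Hb : 1 - e/2 <= b /\ (1+sm)/2 <= b) by (split; [apply Rmax_l|apply Rmax_r]).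
assert (Hb1 : b < 1) by (apply Rmax_lub_lt; lra).
destruct (IVT_interval T1 a' sm c) as [s0 [Hs0 HT0]]; [lra|intros; apply T1_continuity_pt; lra|
  specialize (Ha' a' ltac:(lra)); rewrite Rmin_right, Rmax_left; lra|].
destruct (IVT_interval T1 sm b c) as [s1 [Hs1 HT1]]; [lra|intros; apply T1_continuity_pt; lra|
  specialize (He' b ltac:(lra)); rewrite Rmin_left, Rmax_right; lra|].
assert (s0 <> sm) by (intros ->; lra). assert (s1 <> sm) by (intros ->; lra).
exists s0, s1. split; [lra|split; [lra|]].
intros s Hs. split; [|intros [-> | ->]; auto].
intros HTs. destruct (Rtotal_order s sm) as [Hl|[->|Hg]]; [left|lra|right].
- destruct (Rtotal_order s s0) as [H1|[H1|H1]]; auto.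
  + pose proof (T1_decreasing s s0 ltac:(lra) H1 ltac:(lra)). lra.
  + pose proof (T1_decreasing s0 s ltac:(lra) H1 ltac:(lra)). lra.
- destruct (Rtotal_order s s1) as [H1|[H1|H1]]; auto.
  + pose proof (T1_increasing s s1 ltac:(lra) H1 ltac:(lra)). lra.
  + pose proof (T1_increasing s1 s ltac:(lra) H1 ltac:(lra)). lra.
Qed.
End Minimum.

(** * Limit points of Gamma0 on the half-line *)

Lemma level_point_G lam s w : 0 < lam -> 0 < s < 1 -> 0 <= w <= 1 ->
  0 <= fst (level_point lam s w) <= s /\
  (snd (level_point lam s w))^2 = 2 * lam * (G s - G (fst (level_point lam s w))).
Proof.
intros Hlam Hs Hw. unfold level_point; cbn [fst snd].
assert (0 <= w^2 <= 1) by (simpl; split; nra).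
assert (0 <= s * (1 - w^2) <= s) by (split; nra).
split; auto.
pose proof (G_nondecreasing (s * (1 - w^2)) s ltac:(lra) ltac:(lra)).
rewrite <- Rsqr_pow2, <- Rsqr_neg, Rsqr_sqrt; [reflexivity|nra].
Qed.

Lemma T1_exceeds_near_G s0 eta : 0 < s0 < 1 -> 0 < eta ->
  exists s, 0 < s < 1 /\ T1 s0 < T1 s < T1 s0 + eta /\ Rabs (G s - G s0) < eta.
Proof.
intros Hs0 Heta.
destruct (continuity_pt_Rabs T1 s0 (T1_continuity_pt s0 Hs0) eta Heta) as [d1 [Hd1 HT1]].
destruct (continuity_pt_Rabs G s0 (is_derive_continuity_pt _ _ _ (is_derive_G s0)) eta Heta)
  as [d2 [Hd2 HG]].
destruct (Rmin_pos_bounds d1 d2 Hd1 Hd2) as [Hd [Hdd1 Hdd2]].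
destruct (T1_exceeds_near s0 (Rmin d1 d2) Hs0 Hd) as [s [Hs [Hss0 HTs]]].
specialize (HT1 s ltac:(lra)). specialize (HG s ltac:(lra)). apply Rabs_def2 in HT1.
exists s. split; [auto|split; [split|]; lra].
Qed.

Lemma closure_Gamma0_of_level lam sigma s0 : 0 < lam -> 0 < sigma -> 0 < s0 < 1 ->
  T1 s0 = sigma * sqrt lam -> closure2 (Gamma0 lam sigma) (0, - sqrt (2 * lam * G s0)).
Proof.
intros Hlam Hsig Hs0 HT eps Heps.
set (c := sigma * sqrt lam) in *.
assert (Hc : 0 < c) by (apply Rmult_lt_0_compat; [lra|apply sqrt_lt_R0; lra]).
destruct (Rmin_pos_bounds (eps/4) (eps^2/(24*lam)) ltac:(lra) ltac:(apply Rdiv_lt_0_compat; nra))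
  as [Heta [Heta1 Heta2]].
set (eta := Rmin (eps/4) (eps^2/(24*lam))) in *.
destruct (T1_exceeds_near_G s0 eta Hs0 Heta) as [s [Hs [HTs HGs]]]. rewrite HT in HTs.
destruct (tau1_level s c Hs ltac:(lra)) as [w [Hw Htau]].
exists (level_point lam s w). split; [apply Gamma0_iff; auto; exists s, w; auto|].
destruct (level_point_G lam s w Hlam Hs ltac:(lra)) as [Hx _].
pose proof (T1_sub_tau_lower s Hs w ltac:(lra)) as Hxc.
unfold level_point in *; cbn [fst snd] in *. set (x := s * (1 - w^2)) in *.
destruct (G_bounds x ltac:(lra)) as [HGx0 HGx].
pose proof (G_nondecreasing x s ltac:(lra) ltac:(lra)).
pose proof (G_pos s0 ltac:(lra)).
eapply Rle_lt_trans; [apply norm2_le_abs_add|].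
rewrite Rminus_0_l, Rabs_Ropp, Rabs_right by lra.
replace (- sqrt (2 * lam * G s0) - - sqrt (2 * lam * (G s - G x)))
  with (sqrt (2 * lam * (G s - G x)) - sqrt (2 * lam * G s0)) by ring.
eapply Rle_lt_trans; [apply Rplus_le_compat_l, sqrt_sub_le; nra|].
assert (sqrt (Rabs (2 * lam * (G s - G x) - 2 * lam * G s0)) <= eps / 2).
{ rewrite <- (sqrt_square (eps/2)) by lra. apply sqrt_le_1_alt.
  replace (2 * lam * (G s - G x) - 2 * lam * G s0) with (2 * lam * ((G s - G s0) - G x)) by ring.
  rewrite Rabs_mult, Rabs_right by lra.
  assert (Rabs (G s - G s0 - G x) <= 3 * eta) by (apply Rabs_le; apply Rabs_def2 in HGs; lra).
  apply Rle_trans with (2 * lam * (3 * eta)); [apply Rmult_le_compat_l; lra|].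
  apply (Rmult_le_compat_l (6 * lam)) in Heta2; [|lra].
  replace (6 * lam * (eps^2 / (24 * lam))) with (eps / 2 * (eps / 2)) in Heta2 by (field; lra).
  lra. }
lra.
Qed.

Lemma T1_sub_tau_upper_uniform Y s w : 0 < Y -> 0 < s < 1 -> 0 <= w <= 1 ->
  3*Y/2 <= s -> s * (1 - w^2) <= 9*Y/8 ->
  T1 s - tau 1 s w <= 2 / sqrt (Y/16) / (3*Y/2) * (s * (1 - w^2)).
Proof.
intros HY Hs Hw Hsl Hx.
assert (H1w : 0 <= 1 - w^2 <= 3/4).
{ split; [simpl; nra|]. apply (Rmult_le_reg_l s); [lra|]. nra. }
eapply Rle_trans; [apply T1_sub_tau_upper; auto; lra|].
pose proof (sqrt_lt_R0 (Y/16) ltac:(lra)).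
assert (2 / sqrt (s/24) <= 2 / sqrt (Y/16)).
{ apply Rmult_le_compat_l; [lra|]. apply Rinv_le_contravar; auto. apply sqrt_le_1_alt. lra. }
replace (2 / sqrt (Y/16) / (3*Y/2) * (s * (1 - w^2)))
  with (2 / sqrt (Y/16) * ((1 - w^2) * (s / (3*Y/2)))) by (field; lra).
apply Rmult_le_compat; try lra.
- apply Rlt_le, Rdiv_lt_0_compat; [lra|apply sqrt_lt_R0; lra].
- assert (1 <= s / (3*Y/2)) by (apply (Rmult_le_reg_r (3*Y/2)); [lra|]; field_simplify; lra).
  nra.
Qed.

Lemma closure_Gamma0_near lam sigma y eps : 0 < lam -> 0 < sigma ->
  closure2 (Gamma0 lam sigma) (0, y) -> 0 < eps ->
  exists s w, 0 < s < 1 /\ 0 < w < 1 /\ tau 1 s w = sigma * sqrt lam /\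
    fst (level_point lam s w) < eps /\ Rabs (snd (level_point lam s w) - y) < eps.
Proof.
intros Hlam Hsig Hcl He. destruct (Hcl eps He) as [q [Hq Hdist]].
apply Gamma0_iff in Hq as [s [w [Hs [Hw [Htau ->]]]]]; auto.
exists s, w. do 3 (split; auto).
destruct (level_point_G lam s w Hlam Hs ltac:(lra)) as [Hx _].
destruct (level_point lam s w) as [x yq]; cbn [fst snd] in *. split.
- eapply Rle_lt_trans; [|apply Hdist]. eapply Rle_trans; [|apply abs_le_norm2].
  rewrite Rminus_0_l, Rabs_Ropp, Rabs_right; lra.
- eapply Rle_lt_trans; [|apply Hdist]. rewrite Rplus_comm, Rabs_minus_sym. apply abs_le_norm2.
Qed.

Lemma level_point_G_near lam s w y eps : 0 < lam -> 0 < s < 1 -> 0 <= w <= 1 -> eps <= 1 ->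
  fst (level_point lam s w) < eps -> Rabs (snd (level_point lam s w) - y) < eps ->
  Rabs (G s - y^2 / (2*lam)) < eps * ((2 * Rabs y + 1) / (2*lam) + 1).
Proof.
intros Hlam Hs Hw He Hxe Hye.
destruct (level_point_G lam s w Hlam Hs Hw) as [Hx Hy2].
destruct (level_point lam s w) as [x yq]; cbn [fst snd] in *.
destruct (G_bounds x ltac:(lra)) as [HGx0 HGx].
pose proof (sq_sub_le yq y eps Hye He) as Hsq.
replace (G s - y^2 / (2*lam)) with ((yq^2 - y^2) / (2*lam) + G x) by (rewrite Hy2; field; lra).
eapply Rle_lt_trans; [apply Rabs_triang|]. rewrite (Rabs_right (G x)) by lra.
unfold Rdiv. rewrite Rabs_mult, (Rabs_right (/ (2*lam))) by (apply Rle_ge, Rlt_le, Rinv_0_lt_compat; lra).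
apply (Rmult_le_compat_r (/ (2*lam))) in Hsq; [|apply Rlt_le, Rinv_0_lt_compat; lra].
lra.
Qed.

Lemma closure_Gamma0_approx lam sigma y : 0 < lam -> 0 < sigma -> y < 0 ->
  closure2 (Gamma0 lam sigma) (0, y) ->
  forall t, 0 < t -> exists s, 0 < s < 1 /\
    Rabs (T1 s - sigma * sqrt lam) < t /\ Rabs (G s - y^2 / (2*lam)) < t.
Proof.
intros Hlam Hsig Hy Hcl t Ht.
set (Y := y^2 / (2*lam)).
assert (HY : 0 < Y) by (unfold Y; apply Rdiv_lt_0_compat; [simpl; nra|lra]).
set (D := (2 * Rabs y + 1) / (2*lam) + 1).
assert (HD : 1 <= D).
{ pose proof (Rabs_pos y). assert (0 <= (2 * Rabs y + 1) / (2*lam)) by (apply Rdiv_le_0_compat; lra).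
  unfold D; lra. }
set (C := 2 / sqrt (Y/16) / (3*Y/2)).
assert (HC : 0 < C).
{ apply Rdiv_lt_0_compat; [apply Rdiv_lt_0_compat; [lra|apply sqrt_lt_R0]|]; lra. }
destruct (Rmin_pos_bounds t (Y/2) Ht ltac:(lra)) as [Ht' [Ht'1 Ht'2]].
set (t' := Rmin t (Y/2)) in *.
assert (Heps : exists eps, 0 < eps /\ eps <= 1 /\ eps * D <= t' /\ eps <= 9*Y/8 /\ C * eps < t).
{ exists (Rmin (Rmin 1 (t'/D)) (Rmin (9*Y/8) (t/(C+1)))).
  destruct (Rmin_pos_bounds 1 (t'/D) ltac:(lra) ltac:(apply Rdiv_lt_0_compat; lra)) as [He1 [He11 He12]].
  destruct (Rmin_pos_bounds (9*Y/8) (t/(C+1)) ltac:(lra) ltac:(apply Rdiv_lt_0_compat; lra))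
    as [He2 [He21 He22]].
  destruct (Rmin_pos_bounds _ _ He1 He2) as [He [He3 He4]].
  set (eps := Rmin (Rmin 1 (t'/D)) (Rmin (9*Y/8) (t/(C+1)))) in *.
  repeat split; try lra.
  - apply (Rmult_le_reg_r (/ D)); [apply Rinv_0_lt_compat; lra|].
    replace (eps * D * / D) with eps by (field; lra). unfold Rdiv in *. lra.
  - apply Rle_lt_trans with (C * (t/(C+1))); [apply Rmult_le_compat_l; lra|].
    apply (Rmult_lt_reg_r (C+1)); [lra|]. field_simplify; lra. }
destruct Heps as [eps [He [He1 [HeD [HeY HeC]]]]].
destruct (closure_Gamma0_near lam sigma y eps Hlam Hsig Hcl He) as [s [w [Hs [Hw [Htau [Hxe Hye]]]]]].
pose proof (level_point_G_near lam s w y eps Hlam Hs ltac:(lra) He1 Hxe Hye) as HGY.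
fold Y D in HGY.
assert (Hsl : 3*Y/2 <= s).
{ destruct (G_bounds s ltac:(lra)). apply Rabs_def2 in HGY. lra. }
destruct (level_point_G lam s w Hlam Hs ltac:(lra)) as [Hx _].
unfold level_point in Hxe, Hx; cbn [fst snd] in Hxe, Hx.
pose proof (T1_sub_tau_upper_uniform Y s w HY Hs ltac:(lra) Hsl ltac:(lra)) as Hgap.
pose proof (tau_increasing 1 s ltac:(lra) Hs w 1 ltac:(lra)) as Hlt. fold (T1 s) in Hlt.
fold C in Hgap. rewrite Htau in Hgap, Hlt.
exists s. split; auto. split; [|lra].
apply Rabs_def1; [|lra].
assert (C * (s * (1 - w^2)) <= C * eps) by (apply Rmult_le_compat_l; lra).
lra.
Qed.

Lemma T1_eq_of_approx s0 c : 0 < s0 < 1 ->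
  (forall t, 0 < t -> exists s, 0 < s < 1 /\ Rabs (T1 s - c) < t /\ Rabs (G s - G s0) < t) ->
  T1 s0 = c.
Proof.
intros Hs0 Happrox. destruct (Req_dec (T1 s0) c) as [|Hne]; auto. exfalso.
set (d := Rabs (T1 s0 - c)). assert (Hd : 0 < d) by (apply Rabs_pos_lt; lra).
destruct (continuity_pt_Rabs T1 s0 (T1_continuity_pt s0 Hs0) (d/2) ltac:(lra)) as [del [Hdel HT1]].
destruct (G_preimage_near s0 del Hs0 Hdel) as [t [Ht HGnear]].
destruct (Rmin_pos_bounds t (d/2) Ht ltac:(lra)) as [Ht' [Ht'1 Ht'2]].
destruct (Happrox _ Ht') as [s [Hs [HT HG]]].
specialize (HT1 s (HGnear s Hs ltac:(lra))).
assert (d <= Rabs (T1 s0 - T1 s) + Rabs (T1 s - c)).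
{ unfold d. replace (T1 s0 - c) with ((T1 s0 - T1 s) + (T1 s - c)) by ring. apply Rabs_triang. }
rewrite Rabs_minus_sym in HT1. lra.
Qed.

Lemma closure_Gamma0_level lam sigma y : 0 < lam -> 0 < sigma -> y < 0 ->
  closure2 (Gamma0 lam sigma) (0, y) ->
  exists s0, 0 < s0 < 1 /\ T1 s0 = sigma * sqrt lam /\ y = - sqrt (2 * lam * G s0).
Proof.
intros Hlam Hsig Hy Hcl.
pose proof (closure_Gamma0_approx lam sigma y Hlam Hsig Hy Hcl) as Happrox.
set (c := sigma * sqrt lam) in *. set (Y := y^2 / (2*lam)) in *.
assert (HY : 0 < Y) by (unfold Y; apply Rdiv_lt_0_compat; [simpl; nra|lra]).
destruct (T1_large_near_1 (c + 1)) as [e [He He']].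
(* [T1] blows up at 1, so the approximating [s] stay below [1 - e]. *)
assert (HYe : Y <= G (1 - e)).
{ destruct (Rle_dec Y (G (1 - e))) as [|HYe]; auto. exfalso.
  destruct (Rmin_pos_bounds 1 (Y - G (1 - e)) ltac:(lra) ltac:(lra)) as [Ht [Ht1 Ht2]].
  destruct (Happrox _ Ht) as [s [Hs [HT HG]]]. apply Rabs_def2 in HT, HG.
  destruct (Rle_dec s (1 - e)); [pose proof (G_nondecreasing s (1 - e) ltac:(lra) ltac:(lra)); lra|].
  specialize (He' s ltac:(lra)). lra. }
assert (HG0 : G 0 = 0) by (unfold G; simpl; field).
destruct (IVT_interval G 0 (1 - e) Y) as [s0 [Hs0 HGs0]];
  [lra|intros; eapply is_derive_continuity_pt, is_derive_G|rewrite Rmin_left, Rmax_right; lra|].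
assert (Hs0' : 0 < s0 < 1).
{ split; [|lra]. destruct (Req_dec s0 0) as [->|]; lra. }
exists s0. split; auto. split.
- apply T1_eq_of_approx; auto. rewrite HGs0. exact Happrox.
- rewrite HGs0. unfold Y. replace (2 * lam * (y^2 / (2*lam))) with (y^2) by (field; lra).
  rewrite <- Rsqr_pow2, sqrt_Rsqr_abs, Rabs_left by lra. ring.
Qed.

Lemma closure_Gamma0_halfline lam sigma y : 0 < lam -> 0 < sigma -> y < 0 ->
  closure2 (Gamma0 lam sigma) (0, y) <->
  exists s0, 0 < s0 < 1 /\ T1 s0 = sigma * sqrt lam /\ y = - sqrt (2 * lam * G s0).
Proof.
intros Hlam Hsig Hy. split; [apply closure_Gamma0_level; auto|].
intros [s0 [Hs0 [HT ->]]]. apply closure_Gamma0_of_level; auto.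
Qed.

Theorem corollary2p1 (sigma : R) (Hsigma : 0 < sigma < 1 / 2) :
  exists lamstar, 0 < lamstar /\
    (forall lam, 0 < lam < lamstar ->
       forall y, y < 0 -> ~ closure2 (Gamma0 lam sigma) (0, y)) /\
    (exists xistar, 0 < xistar /\
       forall y, y < 0 -> (closure2 (Gamma0 lamstar sigma) (0, y) <-> y = - xistar)) /\
    (forall lam, lamstar < lam ->
       exists xi0 xi1, 0 < xi0 < xi1 /\
         forall y, y < 0 ->
           (closure2 (Gamma0 lam sigma) (0, y) <-> (y = - xi0 \/ y = - xi1))).
Proof.
destruct T1_has_min as [sm [Hsm Hmin]].
set (lamstar := (T1 sm / sigma)^2).
assert (Hstar : sigma * sqrt lamstar = T1 sm).
{ pose proof (T1_pos sm Hsm). unfold lamstar. rewrite sqrt_pow2; [field|apply Rlt_le, Rdiv_lt_0_compat]; lra. }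
assert (Hls : 0 < lamstar) by (apply pow_lt, Rdiv_lt_0_compat; [apply T1_pos|]; lra).
exists lamstar. split; [auto|split; [|split]].
- intros lam [Hlam Hlt] y Hy.
  rewrite closure_Gamma0_halfline by lra. intros [s [Hs [HT _]]].
  pose proof (Hmin s Hs). pose proof (mult_sqrt_lt sigma lam lamstar ltac:(lra) ltac:(lra)). lra.
- exists (sqrt (2 * lamstar * G sm)). split; [pose proof (G_pos sm ltac:(lra)); apply sqrt_lt_R0; nra|].
  intros y Hy. rewrite closure_Gamma0_halfline by lra. split.
  + intros [s [Hs [HT ->]]]. rewrite (T1_min_unique sm Hsm Hmin s Hs) by lra. reflexivity.
  + intros ->. exists sm. auto.
- intros lam Hlt.
  pose proof (mult_sqrt_lt sigma lamstar lam ltac:(lra) ltac:(lra)).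
  destruct (T1_level_set sm Hsm Hmin (sigma * sqrt lam)) as [s0 [s1 [Hs01 [Hs1 Hlevel]]]]; [lra|].
  exists (sqrt (2 * lam * G s0)), (sqrt (2 * lam * G s1)). split.
  + pose proof (G_pos s0 ltac:(lra)). pose proof (G_increasing s0 s1 ltac:(lra) ltac:(lra)).
    split; [apply sqrt_lt_R0|apply sqrt_lt_1_alt; split]; nra.
  + intros y Hy. rewrite closure_Gamma0_halfline by lra. split.
    * intros [s [Hs [HT ->]]]. apply Hlevel in HT as [-> | ->]; auto.
    * intros [-> | ->]; [exists s0|exists s1]; (split; [lra|split; [apply Hlevel; lra|auto]]).
Qed.
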